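(* Let $0<\epsilon<1$ and $0<\delta<1$. There exists a verification operator $\Omega$ for $|\Psi\rangle$ with $F(1,\delta,\Omega)\ge1-\epsilon$ (i.e. the target state can be verified within infidelity $\epsilon$ and significance level $\delta$ in the adversarial scenario using a single test, with no restriction on the accessible measurements) iff $$\delta(1-\epsilon)\le\max\{2-2\sqrt{1-\delta}-\delta,\;2\delta-1\},$$ or equivalently iff $$\delta\ge\min\Big\{\frac{4(1-\epsilon)}{(2-\epsilon)^2},\frac{1}{1+\epsilon}\Big\}=\begin{cases}\frac{1}{1+\epsilon},&0<\epsilon\le\frac45,\\ \frac{4(1-\epsilon)}{(2-\epsilon)^2},&\frac45\le\epsilon<1.\end{cases}$$
   Context: Let $\mathcal H$ be a Hilbert space of finite dimension $D\ge2$ and $|\Psi\rangle\in\mathcal H$ a unit vector. A verification operator for $|\Psi\rangle$ is a Hermitian operator $\Omega$ on $\mathcal H$ with $0\le\Omega\le1$, $\Omega|\Psi\rangle=|\Psi\rangle$, whose eigenvalue $1$ is nondegenerate. For $N=1$ and a density operator $\rho$ on $\mathcal H^{\otimes2}$ put $p_\rho=\mathrm{tr}[(\Omega\otimes1)\rho]$, $f_\rho=\mathrm{tr}[(\Omega\otimes|\Psi\rangle\langle\Psi|)\rho]$, and $F(1,\delta,\Omega)=\min\{f_\rho/p_\rho:p_\rho\ge\delta\}$, the minimum over permutation-invariant density operators on $\mathcal H^{\otimes2}$. *)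

From HB Require Import structures.
From mathcomp Require Import all_boot all_order all_algebra.
From mathcomp Require Import complex mxtens.
Set Implicit Arguments. Unset Strict Implicit. Unset Printing Implicit Defensive.
Import Order.TTheory GRing.Theory Num.Theory.
Local Open Scope ring_scope.
Local Open Scope complex_scope.

Section QV.
Variable R : rcfType.
Local Notation C := R[i].

Definition adjmx m n (A : 'M[C]_(m, n)) : 'M[C]_(n, m) := map_mx Num.conj (A^T).

Definition hermitian_mx n (A : 'M[C]_n) : Prop := adjmx A = A.

Definition psd n (A : 'M[C]_n) : Prop :=
  hermitian_mx A /\ forall v : 'cV[C]_n, 0 <= (adjmx v *m A *m v) 0 0.

Definition loewner_le n (A B : 'M[C]_n) : Prop := psd (B - A).

Definition unit_vector n (psi : 'cV[C]_n) : Prop := (adjmx psi *m psi) 0 0 = 1.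

Definition proj n (psi : 'cV[C]_n) : 'M[C]_n := psi *m adjmx psi.

Definition verification_operator n (psi : 'cV[C]_n) (Om : 'M[C]_n) : Prop :=
  hermitian_mx Om /\ loewner_le 0 Om /\ loewner_le Om 1%:M /\
  Om *m psi = psi /\ \rank (eigenspace Om 1) = 1%N.

Definition density n (rho : 'M[C]_n) : Prop := psd rho /\ \tr rho = 1.

(* swap operator on H (x) H, with the index convention of mxtens (A *t B) *)
Definition swap_mx D : 'M[C]_(D * D) :=
  \matrix_(k < D * D, l < D * D)
    ((((mxtens_unindex k).1 == (mxtens_unindex l).2) &&
      ((mxtens_unindex k).2 == (mxtens_unindex l).1)))%:R.

Definition perm_invariant D (rho : 'M[C]_(D * D)) : Prop :=
  swap_mx D *m rho *m swap_mx D = rho.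

Definition p_rho D (Om : 'M[C]_D) (rho : 'M[C]_(D * D)) : C :=
  \tr ((Om *t (1%:M : 'M[C]_D)) *m rho).
Definition f_rho D (psi : 'cV[C]_D) (Om : 'M[C]_D) (rho : 'M[C]_(D * D)) : C :=
  \tr ((Om *t proj psi) *m rho).

(* "F(1, delta, Omega) >= c", where
   F(1,delta,Omega) = min { f_rho / p_rho : rho perm.-invariant density, p_rho >= delta }:
   every admissible rho has f_rho / p_rho >= c. *)
Definition F1_ge D (psi : 'cV[C]_D) (delta : R) (Om : 'M[C]_D) (c : R) : Prop :=
  forall rho : 'M[C]_(D * D), density rho -> perm_invariant rho ->
    delta%:C <= p_rho Om rho -> c%:C <= f_rho psi Om rho / p_rho Om rho.

End QV.

(* Write P = |Psi><Psi| and Q = 1 - P.  For a permutation-invariant state rho put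
   a = tr[(P (x) P) rho], b = tr[(P (x) Q) rho] = tr[(Q (x) P) rho] and c = tr[(Q (x) Q) rho],
   so that a + 2b + c = 1.  For Omega = P + l Q one gets p_rho = a + (1 + l) b + l c and
   f_rho = a + l b, so F(1, delta, Omega) >= 1 - eps becomes an inequality between linear
   functions on a triangle; for l = 1 - sqrt(1 - delta), resp. l = 0, it holds exactly when
   delta (1 - eps) is at most the first, resp. the second, term of the maximum.
   Conversely, given any verification operator Omega and a unit vector w orthogonal to Psi,
   the symmetric states a |Psi Psi><Psi Psi| + b |S><S| + c |w w><w w| with
   |S> = |Psi w> + |w Psi> have the same p_rho and f_rho, now with l = <w|Omega|w> in [0, 1];
   testing the reduced inequality at the two vertices of the segment {p_rho = delta} gives the
   bound. *)

From HB Require Import structures.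
From mathcomp Require Import all_boot all_order all_algebra.
From mathcomp Require Import complex mxtens.
From mathcomp Require Import ring lra.
Set Implicit Arguments. Unset Strict Implicit. Unset Printing Implicit Defensive.
Import Order.TTheory GRing.Theory Num.Theory.
Local Open Scope ring_scope.

Section TensmxExtra.
Variable R : pzRingType.

Lemma tensmxDl m n p q (A B : 'M[R]_(m, n)) (M : 'M[R]_(p, q)) :
  (A + B) *t M = A *t M + B *t M.
Proof. by apply/matrixP=> i j; rewrite !mxE mulrDl. Qed.

Lemma tensmxDr m n p q (A B : 'M[R]_(m, n)) (M : 'M[R]_(p, q)) :
  M *t (A + B) = M *t A + M *t B.
Proof. by apply/matrixP=> i j; rewrite !mxE mulrDr. Qed.

Lemma tensmxZl m n p q k (A : 'M[R]_(m, n)) (M : 'M[R]_(p, q)) :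
  (k *: A) *t M = k *: (A *t M).
Proof. by apply/matrixP=> i j; rewrite !mxE mulrA. Qed.

Lemma tensmx11 m n : (1%:M : 'M[R]_m) *t (1%:M : 'M[R]_n) = 1%:M.
Proof.
apply/matrixP=> i j; case: (mxtens_indexP i) => i1 i2; case: (mxtens_indexP j) => j1 j2.
by rewrite tensmxE !mxE (inj_eq (can_inj (@mxtens_indexK m n))) xpair_eqE -natrM mulnb.
Qed.

Lemma tensmx_mx11 (a b : 'M[R]_1) : (a *t b) 0 0 = a 0 0 * b 0 0.
Proof. by rewrite !mxE; congr (a _ _ * b _ _); apply: val_inj; rewrite /= ?divn1 ?modn1. Qed.

End TensmxExtra.

Section ComplexMatrices.
Variable R : rcfType.
Local Notation C := R[i].

Lemma ge0_complexP (z : C) : 0 <= z -> exists2 r : R, 0 <= r & z = r%:C%C.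
Proof.
move=> z0; have zRe := RRe_real (ger0_real z0).
by exists (complex.Re z); rewrite // -ler0c zRe.
Qed.

Lemma lecR_pdivlMr (x y z : R) : 0 < y -> (x%:C%C <= z%:C%C / y%:C%C) = (x * y <= z).
Proof. by move=> y0; rewrite -fmorph_div lecR ler_pdivlMr. Qed.

Lemma adjmxE m n (A : 'M[C]_(m, n)) i j : adjmx A i j = (A j i)^*.
Proof. by rewrite !mxE. Qed.

Lemma adjmxK m n (A : 'M[C]_(m, n)) : adjmx (adjmx A) = A.
Proof. by apply/matrixP=> i j; rewrite !adjmxE conjCK. Qed.

Lemma adjmx0 m n : adjmx (0 : 'M[C]_(m, n)) = 0.
Proof. by rewrite /adjmx trmx0 map_mx0. Qed.

Lemma adjmx_eq0 m n (A : 'M[C]_(m, n)) : (adjmx A == 0) = (A == 0).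
Proof.
apply/eqP/eqP => [A0|->]; last exact: adjmx0.
by rewrite -[A]adjmxK A0 adjmx0.
Qed.

Lemma adjmxD m n (A B : 'M[C]_(m, n)) : adjmx (A + B) = adjmx A + adjmx B.
Proof. by rewrite /adjmx raddfD map_mxD. Qed.

Lemma adjmxB m n (A B : 'M[C]_(m, n)) : adjmx (A - B) = adjmx A - adjmx B.
Proof. by rewrite /adjmx raddfB map_mxB. Qed.

Lemma adjmxZ m n k (A : 'M[C]_(m, n)) : adjmx (k *: A) = k^* *: adjmx A.
Proof. by apply/matrixP=> i j; rewrite !mxE rmorphM. Qed.

Lemma adjmx_real_scale m n (k : R) (A : 'M[C]_(m, n)) :
  adjmx (k%:C%C *: A) = k%:C%C *: adjmx A.
Proof. by rewrite adjmxZ; congr (_ *: _); apply: conjc_real. Qed.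

Lemma adjmx1 n : adjmx (1%:M : 'M[C]_n) = 1%:M.
Proof. by rewrite /adjmx trmx1 map_mx1. Qed.

Lemma adjmxM m n p (A : 'M[C]_(m, n)) (B : 'M[C]_(n, p)) :
  adjmx (A *m B) = adjmx B *m adjmx A.
Proof. by rewrite /adjmx trmx_mul map_mxM. Qed.

Lemma adjmx_tens m n p q (A : 'M[C]_(m, n)) (B : 'M[C]_(p, q)) :
  adjmx (A *t B) = adjmx A *t adjmx B.
Proof. by rewrite /adjmx trmx_tens map_mxT. Qed.

Lemma adjmx_proj n (z : 'cV[C]_n) : adjmx (proj z) = proj z.
Proof. by rewrite adjmxM adjmxK. Qed.

Definition sqnorm n (v : 'cV[C]_n) : C := (adjmx v *m v) 0 0.

Lemma sqnorm_ge0 n (v : 'cV[C]_n) : 0 <= sqnorm v.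
Proof. by rewrite /sqnorm mxE; apply: sumr_ge0 => i _; rewrite adjmxE mulrC mul_conjC_ge0. Qed.

Lemma sqnorm_eq0 n (v : 'cV[C]_n) : (sqnorm v == 0) = (v == 0).
Proof.
apply/idP/eqP => [|->]; last by rewrite /sqnorm mulmx0 mxE.
rewrite /sqnorm mxE psumr_eq0 => [/allP v0|i _]; last by rewrite adjmxE mulrC mul_conjC_ge0.
apply/matrixP => i j; rewrite (ord1 j) mxE.
by have := v0 i (mem_index_enum i); rewrite adjmxE mulf_eq0 conjC_eq0 orbb => /eqP.
Qed.

Lemma unit_vector_neq0 n (v : 'cV[C]_n) : unit_vector v -> v != 0.
Proof. by move=> Uv; rewrite -sqnorm_eq0 [sqnorm v]Uv oner_eq0. Qed.

Lemma unit_vector_scale n (v : 'cV[C]_n) : v != 0 -> exists k : R, unit_vector (k%:C%C *: v).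
Proof.
rewrite -sqnorm_eq0 => v_neq0; have [r r0 er] := ge0_complexP (sqnorm_ge0 v).
have r_gt0 : 0 < r by rewrite lt_def r0 andbT; apply: contraNneq v_neq0 => r_eq0; rewrite er r_eq0.
exists (Num.sqrt r)^-1.
rewrite /unit_vector adjmx_real_scale -scalemxAl -scalemxAr scalerA mxE -/(sqnorm v) er.
rewrite -!rmorphM /= -invfM -expr2 sqr_sqrtr ?mulVf ?rmorph1 //; exact: lt0r_neq0.
Qed.

Definition braket n (x : 'cV[C]_n) (M : 'M[C]_n) (y : 'cV[C]_n) : C :=
  (adjmx x *m M *m y) 0 0.

Lemma braketDl n (x y z : 'cV[C]_n) M : braket (x + y) M z = braket x M z + braket y M z.
Proof. by rewrite /braket adjmxD !mulmxDl mxE. Qed.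

Lemma braketDr n (x y z : 'cV[C]_n) M : braket z M (x + y) = braket z M x + braket z M y.
Proof. by rewrite /braket mulmxDr mxE. Qed.

Lemma braketD n (v : 'cV[C]_n) A B : braket v (A + B) v = braket v A v + braket v B v.
Proof. by rewrite /braket mulmxDr mulmxDl mxE. Qed.

Lemma braketB n (v : 'cV[C]_n) A B : braket v (A - B) v = braket v A v - braket v B v.
Proof. by rewrite /braket mulmxBr mulmxBl !mxE. Qed.

Lemma braketZ n (v : 'cV[C]_n) k A : braket v (k *: A) v = k * braket v A v.
Proof. by rewrite /braket -scalemxAr -scalemxAl mxE. Qed.

Lemma braket1 n (x y : 'cV[C]_n) : braket x 1%:M y = (adjmx x *m y) 0 0.
Proof. by rewrite /braket mulmx1. Qed.

Lemma braket_proj n (x y z : 'cV[C]_n) :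
  braket x (proj z) y = (adjmx x *m z) 0 0 * (adjmx z *m y) 0 0.
Proof. by rewrite /braket !mulmxA -mulmxA [in LHS]mxE big_ord1. Qed.

Lemma braket_tens m n (x u : 'cV[C]_m) (y v : 'cV[C]_n) A B :
  braket (x *t y) (A *t B) (u *t v) = braket x A u * braket y B v.
Proof.
rewrite /braket (adjmx_tens x y) (tensmx_mul (adjmx x) (adjmx y) A B).
by rewrite (tensmx_mul (adjmx x *m A) (adjmx y *m B) u v) tensmx_mx11.
Qed.

Lemma braket_gram_ge0 m n (Y : 'M[C]_(m, n)) v : 0 <= braket v (adjmx Y *m Y) v.
Proof. by rewrite /braket mulmxA -adjmxM -mulmxA; apply: sqnorm_ge0. Qed.

Lemma mxtrace_mul_proj n (M : 'M[C]_n) (z : 'cV[C]_n) :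
  \tr (M *m proj z) = braket z M z.
Proof. by rewrite mulmxA mxtrace_mulC mulmxA trace_mx11. Qed.

Lemma psd_gram m n (Y : 'M[C]_(m, n)) : psd (adjmx Y *m Y).
Proof. by split; [rewrite /hermitian_mx adjmxM adjmxK | exact: braket_gram_ge0]. Qed.

Lemma psd_proj n (z : 'cV[C]_n) : psd (proj z).
Proof. by rewrite /proj -{1}[z]adjmxK; apply: psd_gram. Qed.

Lemma psdD n (A B : 'M[C]_n) : psd A -> psd B -> psd (A + B).
Proof.
move=> [hA A0] [hB B0]; split; first by rewrite /hermitian_mx adjmxD hA hB.
by move=> v; rewrite -/(braket v _ v) braketD addr_ge0 ?A0 ?B0.
Qed.

Lemma psdZ n (k : R) (A : 'M[C]_n) : 0 <= k -> psd A -> psd (k%:C%C *: A).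
Proof.
move=> k0 [hA A0]; split; first by rewrite /hermitian_mx adjmx_real_scale hA.
by move=> v; rewrite -/(braket v _ v) braketZ mulr_ge0 ?ler0c ?A0.
Qed.

Lemma mxtrace_gram_mul_ge0 m n (Z : 'M[C]_(m, n)) (rho : 'M[C]_n) :
  psd rho -> 0 <= \tr (adjmx Z *m Z *m rho).
Proof.
move=> [_ rho0]; rewrite -mulmxA mxtrace_mulC; apply: sumr_ge0 => i _.
have -> : (Z *m rho *m adjmx Z) i i = braket (adjmx (row i Z)) rho (adjmx (row i Z)).
  rewrite /braket adjmxK -row_mul !mxE; apply: eq_bigr => k _; rewrite !mxE.
  by congr (_ * _); apply: eq_bigr => j _; rewrite !mxE.
exact: rho0.
Qed.

Lemma mxtrace_tens_gram_ge0 m n (X : 'M[C]_m) (Y : 'M[C]_n) rho : psd rho ->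
  0 <= \tr (((adjmx X *m X) *t (adjmx Y *m Y)) *m rho).
Proof. by rewrite -tensmx_mul -adjmx_tens; apply: mxtrace_gram_mul_ge0. Qed.

End ComplexMatrices.

Section Swap.
Variables (R : rcfType) (D : nat).
Local Notation C := R[i].
Local Notation S := (swap_mx R D).

Definition swap_index (k : 'I_(D * D)) : 'I_(D * D) :=
  mxtens_index ((mxtens_unindex k).2, (mxtens_unindex k).1).

Lemma swap_indexK : involutive swap_index.
Proof.
move=> k; rewrite /swap_index mxtens_indexK.
by rewrite -[in RHS](mxtens_unindexK k); case: (mxtens_unindex k).
Qed.

Lemma swap_mxE k l : S k l = (l == swap_index k)%:R.
Proof.
rewrite mxE; congr _%:R.
rewrite -(inj_eq (can_inj (@mxtens_unindexK D D))) /swap_index mxtens_indexK.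
by rewrite [mxtens_unindex l]surjective_pairing xpair_eqE andbC; congr (_ && _); rewrite eq_sym.
Qed.

Lemma swap_mx_sym k l : S k l = S l k.
Proof.
rewrite !swap_mxE.
by have -> : (l == swap_index k) = (k == swap_index l) by apply/eqP/eqP => ->; rewrite swap_indexK.
Qed.

Lemma swap_mulmxE p (M : 'M[C]_(D * D, p)) k l : (S *m M) k l = M (swap_index k) l.
Proof.
rewrite mxE (bigD1 (swap_index k)) //= big1 ?addr0; first by rewrite swap_mxE eqxx mul1r.
by move=> j /negPf jk; rewrite swap_mxE jk mul0r.
Qed.

Lemma mulmx_swapE p (M : 'M[C]_(p, D * D)) k l : (M *m S) k l = M k (swap_index l).
Proof.
rewrite mxE (bigD1 (swap_index l)) //= big1 ?addr0.
  by rewrite swap_mx_sym swap_mxE eqxx mulr1.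
by move=> j /negPf jl; rewrite swap_mx_sym swap_mxE jl mulr0.
Qed.

Lemma adjmx_swap : adjmx S = S.
Proof. by apply/matrixP=> k l; rewrite adjmxE swap_mx_sym swap_mxE conjC_nat. Qed.

Lemma swap_tensmx (A B : 'M[C]_D) : S *m (A *t B) *m S = B *t A.
Proof.
apply/matrixP=> k l; rewrite mulmx_swapE swap_mulmxE !mxE /swap_index !mxtens_indexK /=.
exact: mulrC.
Qed.

Lemma swap_tensv (u v : 'cV[C]_D) : S *m (u *t v) = v *t u.
Proof.
apply/matrixP=> k l; rewrite swap_mulmxE !mxE /swap_index !mxtens_indexK /= mulrC.
by congr (v _ _ * u _ _); apply: val_inj; rewrite /= !ord1.
Qed.

Lemma perm_invariantD (rho sigma : 'M[C]_(D * D)) :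
  perm_invariant rho -> perm_invariant sigma -> perm_invariant (rho + sigma).
Proof. by rewrite /perm_invariant mulmxDr mulmxDl => -> ->. Qed.

Lemma perm_invariantZ k (rho : 'M[C]_(D * D)) :
  perm_invariant rho -> perm_invariant (k *: rho).
Proof. by rewrite /perm_invariant -scalemxAr -scalemxAl => ->. Qed.

Lemma perm_invariant_proj (z : 'cV[C]_(D * D)) : S *m z = z -> perm_invariant (proj z).
Proof. by move=> Sz; rewrite /perm_invariant -{2}adjmx_swap !mulmxA -mulmxA -adjmxM Sz. Qed.

Lemma mxtrace_tens_swap (rho : 'M[C]_(D * D)) A B :
  perm_invariant rho -> \tr ((A *t B) *m rho) = \tr ((B *t A) *m rho).
Proof.
move=> Srho; rewrite -[B *t A](swap_tensmx A) -{1}Srho.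
by rewrite !mulmxA mxtrace_mulC !mulmxA.
Qed.

End Swap.

Section Projections.
Variables (R : rcfType) (D : nat) (psi : 'cV[R[i]]_D).
Local Notation C := R[i].

Definition coproj : 'M[C]_D := 1%:M - proj psi.

Definition two_level_op (l : R) : 'M[C]_D := proj psi + l%:C%C *: coproj.

Lemma add_proj_coproj : proj psi + coproj = 1%:M.
Proof. by rewrite addrC subrK. Qed.

Lemma adjmx_coproj : adjmx coproj = coproj.
Proof. by rewrite adjmxB adjmx1 adjmx_proj. Qed.

Hypothesis Upsi : unit_vector psi.

Lemma unit_vectorE : adjmx psi *m psi = 1%:M.
Proof. by rewrite [LHS]mx11_scalar Upsi. Qed.

Lemma proj_mulv : proj psi *m psi = psi.
Proof. by rewrite -mulmxA unit_vectorE mulmx1. Qed.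

Lemma adjv_mul_proj : adjmx psi *m proj psi = adjmx psi.
Proof. by rewrite mulmxA unit_vectorE mul1mx. Qed.

Lemma coproj_mulv : coproj *m psi = 0.
Proof. by rewrite mulmxBl mul1mx proj_mulv subrr. Qed.

Lemma adjv_mul_coproj : adjmx psi *m coproj = 0.
Proof. by rewrite mulmxBr mulmx1 adjv_mul_proj subrr. Qed.

Lemma coproj_gram : adjmx coproj *m coproj = coproj.
Proof.
rewrite adjmx_coproj {1}/coproj mulmxBl mul1mx.
by rewrite -mulmxA adjv_mul_coproj mulmx0 subr0.
Qed.

Lemma proj_gram : adjmx (proj psi) *m proj psi = proj psi.
Proof. by rewrite adjmx_proj -mulmxA adjv_mul_proj. Qed.

Lemma sub_adjv_of_coproj m (A : 'M[C]_(m, D)) :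
  A *m coproj = 0 -> (A <= adjmx psi)%MS.
Proof.
move=> AQ; have -> : A = A *m psi *m adjmx psi.
  by rewrite -mulmxA -[A in LHS]mulmx1 -add_proj_coproj mulmxDr AQ addr0.
exact: submxMl.
Qed.

Lemma coproj_neq0 : (2 <= D)%N -> coproj != 0.
Proof.
move=> D2; apply/eqP => Q0.
have : \tr (1%:M : 'M[C]_D) = \tr (proj psi) by rewrite -add_proj_coproj Q0 addr0.
rewrite mxtrace1 mxtrace_mulC trace_mx11 Upsi => /eqP; rewrite pnatr_eq1 => /eqP D1.
by rewrite D1 in D2.
Qed.

Lemma exists_orthogonal_unit_vector :
  (2 <= D)%N -> exists w : 'cV[C]_D, unit_vector w /\ adjmx psi *m w = 0.
Proof.
move=> /coproj_neq0 Q_neq0.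
have [i Qi_neq0] : exists i, col i coproj != 0.
  apply/existsP; apply: contraNT Q_neq0; rewrite negb_exists => /forallP Q0.
  by apply/eqP/matrixP => j i; have /eqP/matrixP/(_ j 0) := negPn (Q0 i); rewrite !mxE.
have [k Uk] := unit_vector_scale Qi_neq0.
exists (k%:C%C *: col i coproj); split => //.
by rewrite -scalemxAr colE mulmxA adjv_mul_coproj mul0mx scaler0.
Qed.

Lemma one_sub_two_level_op l : 1%:M - two_level_op l = (1 - l)%:C%C *: coproj.
Proof.
rewrite /two_level_op -[X in X - _]add_proj_coproj rmorphB /= scalerBl scale1r.
by rewrite opprD addrACA subrr add0r.
Qed.

Lemma two_level_op_verification l :
  0 <= l -> l < 1 -> verification_operator psi (two_level_op l).
Proof.
move=> l0 l1; have coproj_psd : psd coproj by rewrite -coproj_gram; apply: psd_gram.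
split; first by rewrite /hermitian_mx adjmxD adjmx_real_scale adjmx_proj adjmx_coproj.
split; first by rewrite /loewner_le subr0; apply: psdD (psd_proj _) (psdZ l0 _).
split; first by rewrite /loewner_le one_sub_two_level_op; apply: psdZ; rewrite // subr_ge0 ltW.
split; first by rewrite /two_level_op mulmxDl proj_mulv -scalemxAl coproj_mulv scaler0 addr0.
have coef_neq0 : (1 - l)%:C%C != 0 :> C by rewrite eq_complex /= subr_eq0 gt_eqF.
rewrite /eigenspace; have -> : \rank (kermx (two_level_op l - 1%:M)) = \rank (adjmx psi).
  apply: eqmx_rank; apply/andP; split.
    apply: sub_adjv_of_coproj; have /eqP := mulmx_ker (two_level_op l - 1%:M).
    rewrite -opprB one_sub_two_level_op mulmxN oppr_eq0 -scalemxAr scaler_eq0.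
    by rewrite (negPf coef_neq0) => /eqP.
  apply/sub_kermxP.
  by rewrite -opprB one_sub_two_level_op mulmxN -scalemxAr adjv_mul_coproj scaler0 oppr0.
by rewrite rank_rV adjmx_eq0 unit_vector_neq0.
Qed.

End Projections.

Section ReducedProblem.
Variable R : rcfType.

(* F(1, delta, P + l Q) >= c, where a, b, cc stand for
   tr[(P (x) P) rho], tr[(P (x) Q) rho], tr[(Q (x) Q) rho]. *)
Definition reduced_F1_ge (l delta c : R) : Prop :=
  forall a b cc : R, 0 <= a -> 0 <= b -> 0 <= cc -> a + 2 * b + cc = 1 ->
    delta <= a + b + l * b + l * cc -> c * (a + b + l * b + l * cc) <= a + l * b.

Lemma reduced_F1_ge_bound (l delta c : R) :
  0 <= l -> l <= 1 -> 0 < delta -> delta < 1 -> 0 < c -> reduced_F1_ge l delta c ->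
  delta * c <= Num.max (2 - 2 * Num.sqrt (1 - delta) - delta) (2 * delta - 1).
Proof.
move=> l0 l1 d0 d1 c0 F1; set s := Num.sqrt (1 - delta).
have s0 : 0 <= s by apply: sqrtr_ge0.
have ss : s * s = 1 - delta by rewrite -expr2 sqr_sqrtr // subr_ge0 ltW.
have l_lt_d : l < delta.
  (* the state |w w> passes with probability l and has fidelity 0 *)
  rewrite ltNge; apply/negP => dl.
  have : c * (0 + 0 + l * 0 + l * 1) <= 0 + l * 0 by apply: F1; lra.
  nra.
have l1' : 0 < 1 - l by lra.
rewrite le_max; case: (leP l (2 * delta - 1)) => [l_small|l_large].
  pose b := (1 - delta) / (1 - l).
  have eb : b * (1 - l) = 1 - delta by rewrite mulfVK // lt0r_neq0.
  have b0 : 0 <= b by apply: divr_ge0; lra.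
  have : c * (1 - 2 * b + b + l * b + l * 0) <= 1 - 2 * b + l * b by apply: F1; nra.
  by move=> F1b; apply/orP; right; nra.
pose b := (delta - l) / (1 - l).
have eb : b * (1 - l) = delta - l by rewrite mulfVK // lt0r_neq0.
have b0 : 0 <= b by apply: divr_ge0; lra.
have pass_eq : 0 + b + l * b + l * (1 - 2 * b) = delta by nra.
have : c * (0 + b + l * b + l * (1 - 2 * b)) <= 0 + l * b by apply: F1; nra.
rewrite pass_eq add0r => F1b; apply/orP; left.
(* (1 - l) (1 - s)^2 - l (delta - l) = (1 - s - l)^2 since delta = 1 - s^2 *)
have lb_le : l * b * (1 - l) <= (1 - s) ^+ 2 * (1 - l).
  have -> : l * b * (1 - l) = l * (delta - l) by rewrite -mulrA eb.
  have : 0 <= (1 - s - l) ^+ 2 by apply: sqr_ge0.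
  nra.
rewrite ler_pM2r // in lb_le; nra.
Qed.

Lemma bound_reduced_F1_ge (delta c : R) :
  0 < delta -> delta < 1 -> 0 < c -> c < 1 ->
  delta * c <= Num.max (2 - 2 * Num.sqrt (1 - delta) - delta) (2 * delta - 1) ->
  exists2 l, 0 <= l < 1 & reduced_F1_ge l delta c.
Proof.
move=> d0 d1 c0 c1; rewrite le_max => /orP [bound|bound]; last first.
  exists 0; rewrite ?lexx ?ltr01 // => a b cc a0 b0 cc0 sum1 pass.
  rewrite !mul0r !addr0 in pass *; nra.
set s := Num.sqrt (1 - delta).
have s0 : 0 <= s by apply: sqrtr_ge0.
have ss : s * s = 1 - delta by rewrite -expr2 sqr_sqrtr // subr_ge0 ltW.
have s_gt0 : 0 < s by rewrite lt_def s0 andbT; apply: contraTneq d1 => s_eq0; nra.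
have s1 : s < 1 by nra.
exists (1 - s); first by apply/andP; lra.
move=> a b cc a0 b0 cc0 sum1; set l := 1 - s; set p := a + b + l * b + l * cc => pass.
(* delta c <= l^2 by hypothesis, and l^2 p <= delta f on the whole triangle *)
have key : s * (delta * (a + l * b) - l ^+ 2 * p) = l * (s * s * (2 - l) * a + l * (p - delta)).
  rewrite /p /l; have -> : delta = 1 - s * s by rewrite ss; ring.
  have -> : cc = 1 - a - 2 * b by lra.
  ring.
have fid_ge : l ^+ 2 * p <= delta * (a + l * b).
  rewrite -subr_ge0 -(pmulr_rge0 _ s_gt0) key /l.
  by apply: mulr_ge0; [lra | apply: addr_ge0; apply: mulr_ge0; nra].
have dc_le : delta * c <= l ^+ 2.
  by have -> : l ^+ 2 = 2 - 2 * s - delta by rewrite /l; nra.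
have p0 : 0 <= p by lra.
nra.
Qed.

Lemma max_bound_iff_min_threshold (eps delta : R) :
  0 < eps -> eps < 1 -> 0 < delta -> delta < 1 ->
  (delta * (1 - eps) <= Num.max (2 - 2 * Num.sqrt (1 - delta) - delta) (2 * delta - 1)) =
  (Num.min (4 * (1 - eps) / (2 - eps) ^+ 2) (1 / (1 + eps)) <= delta).
Proof.
move=> e0 e1 d0 d1; rewrite le_max ge_min.
have e1_gt0 : 0 < 1 + eps by lra.
have e2_gt0 : 0 < (2 - eps) ^+ 2 by rewrite exprn_gt0 //; lra.
rewrite !ler_pdivrMr //; set s := Num.sqrt (1 - delta).
have s0 : 0 <= s by apply: sqrtr_ge0.
have ss : s * s = 1 - delta by rewrite -expr2 sqr_sqrtr // subr_ge0 ltW.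
congr (_ || _); apply/idP/idP => bound; [nra| |nra|nra].
have t_gt0 : 0 < 2 - delta * (2 - eps) by nra.
have : 4 * (s * s) <= (2 - delta * (2 - eps)) ^+ 2.
  rewrite -subr_ge0 ss.
  have -> : (2 - delta * (2 - eps)) ^+ 2 - 4 * (1 - delta) =
    delta * (delta * (2 - eps) ^+ 2 - 4 * (1 - eps)) by ring.
  by apply: mulr_ge0; lra.
nra.
Qed.

Lemma min_threshold_cases (eps : R) : 0 < eps -> eps < 1 ->
  Num.min (4 * (1 - eps) / (2 - eps) ^+ 2) (1 / (1 + eps)) =
    (if eps <= 4 / 5 then 1 / (1 + eps) else 4 * (1 - eps) / (2 - eps) ^+ 2).
Proof.
move=> e0 e1.
have e1_gt0 : 0 < 1 + eps by lra.
have e2_gt0 : 0 < (2 - eps) ^+ 2 by rewrite exprn_gt0 //; lra.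
have -> : (eps <= 4 / 5) = (5 * eps <= 4) by rewrite ler_pdivlMr ?ltr0n // mulrC.
case: ifP => small.
  by apply: min_r; rewrite ler_pdivlMr // mulrAC ler_pdivrMr //; nra.
apply: min_l; rewrite ler_pdivlMr // mulrAC ler_pdivrMr //.
by move/negbT: small; rewrite -ltNge => large; nra.
Qed.

End ReducedProblem.

Section Sufficiency.
Variables (R : rcfType) (D : nat) (psi : 'cV[R[i]]_D).
Hypothesis Upsi : unit_vector psi.
Local Notation P := (proj psi).
Local Notation Q := (coproj psi).

Lemma two_level_op_F1_ge (l delta c : R) :
  0 <= l -> 0 < delta -> reduced_F1_ge l delta c -> F1_ge psi delta (two_level_op psi l) c.
Proof.
move=> l0 d0 F1 rho Drho Srho.
pose t X Y := \tr ((X *t Y) *m rho).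
have t_ge0 X Y : adjmx X *m X = X -> adjmx Y *m Y = Y -> 0 <= t X Y.
  by move=> <- <-; apply: mxtrace_tens_gram_ge0; case: Drho.
have [a a0 ea] := ge0_complexP (t_ge0 _ _ (proj_gram Upsi) (proj_gram Upsi)).
have [b b0 eb] := ge0_complexP (t_ge0 _ _ (proj_gram Upsi) (coproj_gram Upsi)).
have [cc cc0 ec] := ge0_complexP (t_ge0 _ _ (coproj_gram Upsi) (coproj_gram Upsi)).
have eb' : t Q P = b%:C%C by rewrite /t mxtrace_tens_swap.
have tDl X1 X2 Y : t (X1 + X2) Y = t X1 Y + t X2 Y.
  by rewrite /t tensmxDl mulmxDl mxtraceD.
have tDr X Y1 Y2 : t X (Y1 + Y2) = t X Y1 + t X Y2.
  by rewrite /t tensmxDr mulmxDl mxtraceD.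
have tZl k X Y : t (k *: X) Y = k * t X Y.
  by rewrite /t tensmxZl -scalemxAl mxtraceZ.
have sum1 : a + 2 * b + cc = 1.
  apply: (@complexI R); rewrite rmorph1 -Drho.2 -[rho]mul1mx -tensmx11.
  rewrite -(add_proj_coproj psi) -/(t _ _) tDl (tDr P) (tDr Q) ea eb eb' ec.
  by rewrite !rmorphD /= !rmorphM /= rmorph_nat mulr2n mulrDl mul1r !addrA.
have ep : p_rho (two_level_op psi l) rho = (a + b + l * b + l * cc)%:C%C.
  rewrite /p_rho -(add_proj_coproj psi) -/(t _ _) /two_level_op.
  rewrite tDl (tDr P) (tDr (_ *: _)) !tZl ea eb eb' ec.
  by rewrite !rmorphD !rmorphM /= !addrA.
have ef : f_rho psi (two_level_op psi l) rho = (a + l * b)%:C%C.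
  by rewrite /f_rho -/(t _ _) /two_level_op tDl tZl ea eb' rmorphD rmorphM.
rewrite ep ef lecR => pass; rewrite lecR_pdivlMr; first exact: F1.
exact: lt_le_trans pass.
Qed.

End Sufficiency.

Section Necessity.
Variables (R : rcfType) (D : nat) (psi w : 'cV[R[i]]_D).
Local Notation C := R[i].
Hypotheses (Upsi : unit_vector psi) (Uw : unit_vector w) (psi_w : adjmx psi *m w = 0).

Lemma adjw_mul_psi : adjmx w *m psi = 0.
Proof. by rewrite -[LHS]adjmxK adjmxM adjmxK psi_w adjmx0. Qed.

Lemma braket_fixed (A : 'M[C]_D) : hermitian_mx A -> A *m psi = psi ->
  [/\ braket psi A psi = 1, braket psi A w = 0 & braket w A psi = 0].
Proof.
move=> hA Apsi.
have psiA : adjmx psi *m A = adjmx psi by rewrite -[in LHS]hA -adjmxM Apsi.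
rewrite /braket psiA; split; first exact: Upsi.
  by rewrite psi_w mxE.
by rewrite -mulmxA Apsi adjw_mul_psi mxE.
Qed.

(* [b] weighs the unnormalised vector |psi w> + |w psi>, whose squared norm is 2. *)
Definition sym_mix (a b c : R) : 'M[C]_(D * D) :=
  a%:C%C *: proj (psi *t psi) + b%:C%C *: proj (psi *t w + w *t psi) + c%:C%C *: proj (w *t w).

Lemma mxtrace_tens_sym_mix a b c (A B : 'M[C]_D) :
  hermitian_mx A -> A *m psi = psi -> hermitian_mx B -> B *m psi = psi ->
  \tr ((A *t B) *m sym_mix a b c) = a%:C%C + b%:C%C * (braket w A w + braket w B w)
    + c%:C%C * (braket w A w * braket w B w).
Proof.
move=> hA Apsi hB Bpsi.
have [pAp pAw wAp] := braket_fixed hA Apsi; have [pBp pBw wBp] := braket_fixed hB Bpsi.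
rewrite /sym_mix !mulmxDr !mxtraceD -!scalemxAr !mxtraceZ !mxtrace_mul_proj.
by rewrite !braketDl !braketDr !braket_tens pAp pAw wAp pBp pBw wBp; ring.
Qed.

Lemma sym_mix_perm_invariant a b c : perm_invariant (sym_mix a b c).
Proof.
by rewrite /sym_mix; do 2?apply: perm_invariantD; apply: perm_invariantZ;
  apply: perm_invariant_proj; rewrite ?mulmxDr !swap_tensv // addrC.
Qed.

Lemma sym_mix_density a b c : 0 <= a -> 0 <= b -> 0 <= c -> a + 2 * b + c = 1 ->
  density (sym_mix a b c).
Proof.
move=> a0 b0 c0 sum1; split.
  by do 2?apply: psdD; apply: psdZ => //; apply: psd_proj.
have herm1 : hermitian_mx (1%:M : 'M[C]_D) by apply: adjmx1.
rewrite -[sym_mix _ _ _]mul1mx -tensmx11 mxtrace_tens_sym_mix ?mul1mx // braket1 Uw.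
transitivity (a + 2 * b + c)%:C%C; last by rewrite sum1.
by rewrite !rmorphD !rmorphM rmorph_nat /=; ring.
Qed.

Lemma verification_F1_ge_reduced (delta c : R) (Om : 'M[C]_D) :
  0 < delta -> verification_operator psi Om -> F1_ge psi delta Om c ->
  exists2 l, 0 <= l <= 1 & reduced_F1_ge l delta c.
Proof.
move=> d0 [hOm [Om_ge0 [Om_le1 [Ompsi _]]]] F1.
have [l l0 el] : exists2 l : R, 0 <= l & braket w Om w = l%:C%C.
  by apply: ge0_complexP; have := Om_ge0.2 w; rewrite subr0.
exists l.
  rewrite l0 -(lecR l 1) -el -subr_ge0 /=.
  by have := Om_le1.2 w; rewrite -/(braket w _ w) braketB braket1 Uw.
move=> a b cc a0 b0 cc0 sum1 pass.
have herm1 : hermitian_mx (1%:M : 'M[C]_D) by apply: adjmx1.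
have hP : hermitian_mx (proj psi) by apply: adjmx_proj.
have Ppsi := proj_mulv Upsi.
have ep : p_rho Om (sym_mix a b cc) = (a + b + l * b + l * cc)%:C%C.
  rewrite /p_rho mxtrace_tens_sym_mix ?mul1mx // braket1 Uw el.
  by rewrite !rmorphD !rmorphM /=; ring.
have ef : f_rho psi Om (sym_mix a b cc) = (a + l * b)%:C%C.
  rewrite /f_rho mxtrace_tens_sym_mix // braket_proj adjw_mul_psi psi_w el mxE.
  by rewrite !rmorphD !rmorphM /=; ring.
have := F1 _ (sym_mix_density a0 b0 cc0 sum1) (sym_mix_perm_invariant a b cc).
by rewrite ep ef lecR lecR_pdivlMr //; [apply | apply: lt_le_trans pass].
Qed.

End Necessity.

Lemma verifiable_iff (R : rcfType) (D : nat) (psi : 'cV[R[i]]_D) (c delta : R) :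
  (2 <= D)%N -> unit_vector psi -> 0 < c < 1 -> 0 < delta < 1 ->
  (exists Om, verification_operator psi Om /\ F1_ge psi delta Om c) <->
  delta * c <= Num.max (2 - 2 * Num.sqrt (1 - delta) - delta) (2 * delta - 1).
Proof.
move=> D2 Upsi /andP[c0 c1] /andP[d0 d1]; split.
  move=> [Om [vOm F1]]; have [w [Uw psi_w]] := exists_orthogonal_unit_vector Upsi D2.
  have [l /andP[l0 l1] Fl] := verification_F1_ge_reduced Upsi Uw psi_w d0 vOm F1.
  exact: reduced_F1_ge_bound Fl.
move=> /bound_reduced_F1_ge [] // l /andP[l0 l1] Fl.
exists (two_level_op psi l); split; first exact: two_level_op_verification.
exact: two_level_op_F1_ge.
Qed.

Unset Implicit Arguments.

Theorem corollary5 (R : rcfType) (D : nat) (psi : 'cV[R[i]]_D) (eps delta : R) :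
  (2 <= D)%N -> unit_vector psi ->
  0 < eps < 1 -> 0 < delta < 1 ->
  ((exists Om : 'M[R[i]]_D, verification_operator psi Om /\ F1_ge psi delta Om (1 - eps))
     <-> delta * (1 - eps) <= Num.max (2 - 2 * Num.sqrt (1 - delta) - delta) (2 * delta - 1))
  /\
  ((exists Om : 'M[R[i]]_D, verification_operator psi Om /\ F1_ge psi delta Om (1 - eps))
     <-> Num.min (4 * (1 - eps) / (2 - eps) ^+ 2) (1 / (1 + eps)) <= delta)
  /\
  Num.min (4 * (1 - eps) / (2 - eps) ^+ 2) (1 / (1 + eps)) =
    (if eps <= 4 / 5 then 1 / (1 + eps) else 4 * (1 - eps) / (2 - eps) ^+ 2).
Proof.
move=> D2 Upsi /andP[e0 e1] delta01; have /andP[d0 d1] := delta01.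
have fidelity01 : 0 < 1 - eps < 1 by apply/andP; lra.
have verifiable := verifiable_iff D2 Upsi fidelity01 delta01.
split; first exact: verifiable.
split; last exact: min_threshold_cases.
by rewrite -max_bound_iff_min_threshold.
Qed.
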